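(* Let $F$ be a field and $t,p$ positive integers with $p\mid t$. Let $M$ be a $t\times t$ $(t,p)$ block invertible square matrix over $F$, let $X$ be a $p\times t$ matrix over $F$ that is block invertible with block size $p$, and let $Y$ be a $t\times p$ matrix over $F$ that is block invertible with block size $p$. Suppose $W$ is an invertible $p\times p$ matrix over $F$ such that $XM^{-1}Y+W$ is invertible. Then the $(t+p)\times(t+p)$ matrix $$N=\begin{pmatrix} M & Y\\ X & XM^{-1}Y+W\end{pmatrix}$$ is a $(t+p,p)$ block invertible square matrix. Moreover, for any such $M,X,Y$, an invertible $W$ with $XM^{-1}Y+W$ invertible exists provided $p>1$.
   Context: For positive integers $a,b,p$ with $p\mid a$ and $p\mid b$, an $a\times b$ matrix (with $a$ rows and $b$ columns) over $F$ is partitioned into $p\times p$ blocks $B_{i,j}$, where $B_{i,j}$ is the submatrix formed by rows $(i-1)p+1,\dots,ip$ and columns $(j-1)p+1,\dots,jp$. Such a matrix is called block invertible (with block size $p$) if every block $B_{i,j}$ is invertible. An $n\times n$ matrix is an $(n,p)$ block invertible square matrix if it is block invertible with block size $p$ and is itself invertible. *)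

From HB Require Import structures.
From mathcomp Require Import all_boot all_order all_algebra.
Set Implicit Arguments. Unset Strict Implicit. Unset Printing Implicit Defensive.
Import GRing.Theory.
Local Open Scope ring_scope.

Lemma block_idx_lt (a p : nat) (i : 'I_(a %/ p)) (k : 'I_p) : (i * p + k < a)%N.
Proof.
have hk := ltn_ord k; have hi := ltn_ord i.
apply: (@leq_trans ((i.+1) * p)); first by rewrite mulSnr ltn_add2l.
by apply: (leq_trans (leq_mul hi (leqnn p))); rewrite leq_divM.
Qed.

Definition block_idx (a p : nat) (i : 'I_(a %/ p)) (k : 'I_p) : 'I_a :=
  Ordinal (block_idx_lt i k).

Definition mxblock_at (F : Type) (a b p : nat) (A : 'M[F]_(a, b))
  (i : 'I_(a %/ p)) (j : 'I_(b %/ p)) : 'M[F]_p :=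
  \matrix_(k < p, l < p) A (block_idx i k) (block_idx j l).

Definition block_invertible (F : fieldType) (a b p : nat) (A : 'M[F]_(a, b)) :=
  [/\ (p %| a)%N, (p %| b)%N &
      forall (i : 'I_(a %/ p)) (j : 'I_(b %/ p)), @mxblock_at F a b p A i j \in unitmx].

Definition block_invertible_sq (F : fieldType) (n p : nat) (A : 'M[F]_n) :=
  @block_invertible F n n p A /\ A \in unitmx.
Arguments mxblock_at {F a b} p A i j.
Arguments block_invertible {F a b} p A.
Arguments block_invertible_sq {F n} p A.

From HB Require Import structures.
From mathcomp Require Import all_boot all_order all_algebra zify ring.
Set Implicit Arguments. Unset Strict Implicit. Unset Printing Implicit Defensive.
Import GRing.Theory.
Local Open Scope ring_scope.

(* The Schur complement of M in N is W, so
   N = [[1, 0], [X M^-1, 1]] * [[M, Y], [0, W]] is invertible, and every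
   p x p block of N is a block of M, X, Y or the corner.

   For the existence of W, write A := X M^-1 Y = L * pid_mx r * U with L, U
   invertible; it suffices to find an invertible D with pid_mx r + D
   invertible, and then W := L D U. Take D := C - diag c with C the cyclic
   permutation matrix. A matrix C - diag d is invertible as soon as some
   d_k = 0: a row vector u in its left kernel satisfies u_(j+1) = u_j d_j, so
   u vanishes from index k + 1 on, all the way round the cycle. Choosing
   c_j := [j < r] except c_(p-1) := 0, both c and c - [_ < r] have a zero
   (at p - 1 and at 0 respectively), which needs p > 1. *)

Section CyclicSubDiag.

Variables (F : fieldType) (p : nat).

Definition cyclic_sub_diag_mx (d : 'I_p -> F) : 'M[F]_p :=
  \matrix_(i, j) ((i == ordS j)%:R - (i == j)%:R * d j).

Lemma val_iter_ordS (k : 'I_p) m : val (iter m (@ordS p) k) = ((k + m) %% p)%N.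
Proof.
elim: m => [|m IHm] /=; first by rewrite addn0 modn_small.
by rewrite IHm addnS -addn1 modnDml addn1.
Qed.

Lemma row_mul_cyclic_sub_diag (d : 'I_p -> F) (u : 'rV[F]_p) j :
  (u *m cyclic_sub_diag_mx d) 0 j = u 0 (ordS j) - u 0 j * d j.
Proof.
have sum_pick (a : 'I_p) f : \sum_i (i == a)%:R * f i = f a :> F.
  by rewrite (bigD1 a) //= eqxx mul1r big1 ?addr0 // => i /negbTE ->; rewrite mul0r.
rewrite mxE; under eq_bigr do rewrite mxE mulrBr mulrCA mulrC.
by rewrite sumrB !sum_pick.
Qed.

Lemma cyclic_sub_diag_mx_unit (d : 'I_p -> F) (k : 'I_p) :
  d k = 0 -> cyclic_sub_diag_mx d \in unitmx.
Proof.
move=> dk0; rewrite -row_free_unit -kermx_eq0; apply/eqP/row_matrixP => r.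
set u := row r _; have uS0 : u *m cyclic_sub_diag_mx d = 0.
  by rewrite -row_mul mulmx_ker row0.
have u_succ j : u 0 (ordS j) = u 0 j * d j.
  by apply/eqP; rewrite -subr_eq0 -row_mul_cyclic_sub_diag uS0 mxE.
have u_iter0 m : u 0 (iter m.+1 (@ordS p) k) = 0.
  elim: m => [|m IHm]; first by rewrite /= u_succ dk0 mulr0.
  by rewrite [iter _ _ _]/= u_succ IHm mul0r.
rewrite row0; apply/rowP => j; rewrite [RHS]mxE.
have -> : j = iter (p - k - 1 + j).+1 (@ordS p) k.
  apply: val_inj; have := ltn_ord k; rewrite val_iter_ordS => hk.
  have -> : (k + (p - k - 1 + j).+1 = 1 * p + j)%N by lia.
  by rewrite modnMDl modn_small.
exact: u_iter0.
Qed.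

Lemma pid_mx_add_cyclic_sub_diag r (d : 'I_p -> F) :
  pid_mx r + cyclic_sub_diag_mx d =
  cyclic_sub_diag_mx (fun j => d j - (j < r)%N%:R).
Proof.
apply/matrixP => i j; rewrite !mxE [(i == j :> nat)]val_eqE.
by case: (eqVneq i j) => [->|/negbTE ne]; rewrite ?eqxx ?ne /=; ring.
Qed.

End CyclicSubDiag.

Lemma exists_unitmx_add_unitmx (F : fieldType) p (A : 'M[F]_p) :
  (1 < p)%N -> exists2 W : 'M[F]_p, W \in unitmx & A + W \in unitmx.
Proof.
case: p A => [|[|p]] A // _; set r := \rank A.
pose c (j : 'I_p.+2) : F := ((j < r)%N && (j != ord_max))%:R.
have unit_ebase D : D \in unitmx -> col_ebase A *m D *m row_ebase A \in unitmx.
  by move=> Du; rewrite !unitmx_mul col_ebase_unit row_ebase_unit Du.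
exists (col_ebase A *m cyclic_sub_diag_mx c *m row_ebase A).
  by apply/unit_ebase/(@cyclic_sub_diag_mx_unit _ _ _ ord_max); rewrite /c eqxx andbF.
rewrite -{1}(mulmx_ebase A) -mulmxDl -mulmxDr pid_mx_add_cyclic_sub_diag.
apply/unit_ebase/(@cyclic_sub_diag_mx_unit _ _ _ ord0).
by rewrite /c; case: (0 < r)%N; rewrite ?subrr.
Qed.

Lemma unitmx_block_schur (F : fieldType) m n (M : 'M[F]_m) (Y : 'M[F]_(m, n))
    (X : 'M[F]_(n, m)) (W : 'M[F]_n) :
  M \in unitmx ->
  (block_mx M Y X (X *m invmx M *m Y + W) \in unitmx) = (W \in unitmx).
Proof.
move=> Mu.
have -> : block_mx M Y X (X *m invmx M *m Y + W) =
          block_mx 1%:M 0 (X *m invmx M) 1%:M *m block_mx M Y 0 W.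
  rewrite mulmx_block !mul1mx !mul0mx ?mulmx0 !addr0 ?add0r.
  by rewrite -[X *m invmx M *m M]mulmxA mulVmx // mulmx1.
by rewrite unitmx_mul !unitmxE det_lblock det_ublock !det1 mulr1 unitr1 unitrM
  -!unitmxE Mu.
Qed.

Section BlockIndex.

Variables (p : nat) (p_gt0 : (0 < p)%N).

Lemma block_idx_addn_split m (p_dvd_m : (p %| m)%N) (i : 'I_((m + p) %/ p)) :
  {i' : 'I_(m %/ p) | forall k, block_idx i k = lshift p (block_idx i' k)}
  + {forall k : 'I_p, block_idx i k = rshift m k}.
Proof.
case: (ltnP i (m %/ p)) => i_lt; first by left; exists (Ordinal i_lt) => k; apply: val_inj.
right => k; apply: val_inj => /=.
have i_le : (i <= m %/ p)%N.
  have := ltn_ord i; move: (nat_of_ord i) => n.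
  by rewrite divnDr ?dvdnn // divnn p_gt0 addn1 ltnS.
have -> : nat_of_ord i = (m %/ p)%N by apply/anti_leq; rewrite i_le i_lt.
by rewrite divnK.
Qed.

Lemma block_idx_self (i : 'I_(p %/ p)) (k : 'I_p) : block_idx i k = k.
Proof.
apply: val_inj => /=; have := ltn_ord i; move: (nat_of_ord i) => n.
by rewrite divnn p_gt0 ltnS leqn0 => /eqP ->.
Qed.

End BlockIndex.

Lemma block_invertible_block_mx (F : fieldType) m n p (p_gt0 : (0 < p)%N)
    (M : 'M[F]_(m, n)) (Y : 'M[F]_(m, p)) (X : 'M[F]_(p, n)) (D : 'M[F]_p) :
  block_invertible p M -> block_invertible p X -> block_invertible p Y ->
  D \in unitmx -> block_invertible p (block_mx M Y X D).
Proof.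
move=> [p_dvd_m p_dvd_n Mb] [_ _ Xb] [_ _ Yb] Du.
have o : 'I_(p %/ p) by rewrite divnn p_gt0; exact: ord0.
split; rewrite ?dvdn_add ?dvdnn // => i j.
have mxblockE (A : 'M[F]_(m + p, n + p)) (k l : 'I_p) : mxblock_at p A i j k l =
  A (block_idx i k) (block_idx j l) by rewrite mxE.
case: (block_idx_addn_split p_gt0 p_dvd_m i) => [[i' Ei]|Ei];
case: (block_idx_addn_split p_gt0 p_dvd_n j) => [[j' Ej]|Ej].
- suff -> : mxblock_at p (block_mx M Y X D) i j = mxblock_at p M i' j' by exact: Mb.
  by apply/matrixP => k l; rewrite mxblockE Ei Ej block_mxEul mxE.
- suff -> : mxblock_at p (block_mx M Y X D) i j = mxblock_at p Y i' o by exact: Yb.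
  by apply/matrixP => k l; rewrite mxblockE Ei Ej block_mxEur mxE block_idx_self.
- suff -> : mxblock_at p (block_mx M Y X D) i j = mxblock_at p X o j' by exact: Xb.
  by apply/matrixP => k l; rewrite mxblockE Ei Ej block_mxEdl mxE block_idx_self.
- suff -> : mxblock_at p (block_mx M Y X D) i j = D by exact: Du.
  by apply/matrixP => k l; rewrite mxblockE Ei Ej block_mxEdr.
Qed.

Theorem mainTheorem3 (F : fieldType) (t p : nat)
  (ht : (0 < t)%N) (hp : (0 < p)%N) (hpt : (p %| t)%N)
  (M : 'M[F]_t) (X : 'M[F]_(p, t)) (Y : 'M[F]_(t, p))
  (hM : block_invertible_sq p M)
  (hX : block_invertible p X) (hY : block_invertible p Y) :
  (forall W : 'M[F]_p, W \in unitmx ->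
     (X *m invmx M *m Y + W) \in unitmx ->
     block_invertible_sq p (block_mx M Y X (X *m invmx M *m Y + W)))
  /\ ((1 < p)%N -> exists W : 'M[F]_p,
        W \in unitmx /\ (X *m invmx M *m Y + W) \in unitmx).
Proof.
have [Mb Mu] := hM; split.
  move=> W Wu Du; split; first exact: block_invertible_block_mx.
  by rewrite unitmx_block_schur.
move=> p_gt1; have [W Wu Du] := exists_unitmx_add_unitmx (X *m invmx M *m Y) p_gt1.
by exists W.
Qed.
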